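(* Let $\underline{P}$ be a lower prevision that is 2-coherent wherever it is defined (its domain containing the gambles below), with conjugate $\overline{P}$. Let $X$ be a gamble and $0<s<t$. Then (a) $[\underline{P}(|X|^s)]^{1/s}\le[\overline{P}(|X|^s)]^{1/s}\le[\overline{P}(|X|^t)]^{1/t}$; (b) if $X\ge 0$, then $[\underline{P}(X^s)]^{1/s}\le[\underline{P}(X^t)]^{1/t}$.
   Context: $\Pi$ is a partition of the sure event into pairwise disjoint non-impossible events; a gamble is a bounded map $X:\Pi\to\mathbb{R}$, and $|X|^s$, $X^s$ are defined pointwise. A lower prevision $\underline{P}:\mathcal{D}\to\mathbb{R}$ is 2-coherent iff for all $X_0,X_1\in\mathcal{D}$, $s_1\ge 0$, $s_0\in\mathbb{R}$, $\sup[s_1(X_1-\underline{P}(X_1))-s_0(X_0-\underline{P}(X_0))]\ge 0$; its conjugate is $\overline{P}(Y)=-\underline{P}(-Y)$. *)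

From HB Require Import structures.
From mathcomp Require Import all_boot all_order all_algebra.
From mathcomp Require Import all_classical all_reals all_analysis.
Set Implicit Arguments. Unset Strict Implicit. Unset Printing Implicit Defensive.
Import Order.TTheory GRing.Theory Num.Theory.
Local Open Scope classical_set_scope.
Local Open Scope ring_scope.

(* Omega plays the role of the partition Pi; a gamble is a bounded map Omega -> R. *)
Definition gamble (R : realType) (Omega : Type) (X : Omega -> R) : Prop :=
  exists M : R, forall w, `|X w| <= M.

Definition two_coherent (R : realType) (Omega : Type)
  (D : set (Omega -> R)) (P : (Omega -> R) -> R) : Prop :=
  forall X0 X1, D X0 -> D X1 -> forall s1 s0 : R, 0 <= s1 ->
    0 <= sup (range (fun w => s1 * (X1 w - P X1) - s0 * (X0 w - P X0))).

Definition upper (R : realType) (Omega : Type) (P : (Omega -> R) -> R)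
  (Y : Omega -> R) : R := - P (fun w => - Y w).

From HB Require Import structures.
From mathcomp Require Import all_boot all_order all_algebra.
From mathcomp Require Import all_classical all_reals all_analysis.
From mathcomp Require Import ring lra.
Set Implicit Arguments.
Unset Strict Implicit.
Unset Printing Implicit Defensive.
Import Order.TTheory GRing.Theory Num.Theory.
Local Open Scope classical_set_scope.
Local Open Scope ring_scope.

(* For 0 < r < 1 the map z |-> z^r lies below its tangent at every c > 0,
   whose slope is r c^(r-1).  By 2-coherence the gamble
   Z^r - P(Z^r) - r c^(r-1) (Z - P Z) is never bounded above by a negative
   constant, hence P(Z^r) <= (1 - r) c^r + r c^(r-1) P Z for all c > 0, and
   c := P Z gives P(Z^r) <= (P Z)^r (for P Z = 0, the choice
   c := P(Z^r)^(1/r) forces P(Z^r) <= 0).  The same holds for the conjugate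
   upper prevision, and Z := |X|^t, r := s/t yields the monotonicity of the
   norms. *)

Section PowRConcave.
Variables (R : realType) (r : R).
Hypotheses (r_gt0 : 0 < r) (r_lt1 : r < 1).

Lemma powR_le_tangent (c z : R) : 0 < c -> 0 <= z ->
  z `^ r <= c `^ r * (1 - r) + r * c `^ r / c * z.
Proof.
move=> c_gt0 z_ge0; have zc_ge0 : 0 <= z / c by rewrite divr_ge0 // ltW.
have young := @conjugate_powR R ((z / c) `^ r) 1 r^-1 (1 - r)^-1
  (powR_ge0 _ _) ler01 ltac:(by rewrite invr_gt0)
  ltac:(by rewrite invr_gt0 subr_gt0) ltac:(by rewrite !invrK; ring).
rewrite -powRrM mulfV ?gt_eqF // powRr1 // powR1 mulr1 !invrK in young.
have -> : z `^ r = c `^ r * (z / c) `^ r.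
  by rewrite -powRM ?(ltW c_gt0) // mulrCA divff ?gt_eqF // mulr1.
by have := ler_wpM2l (powR_ge0 c r) young; lra.
Qed.

Lemma le_powR_of_tangent (a b : R) : 0 <= b ->
  (forall c, 0 < c -> a <= c `^ r * (1 - r) + r * c `^ r / c * b) -> a <= b `^ r.
Proof.
rewrite le_eqVlt => /predU1P[<- | b_gt0] tangent; last first.
  by have := tangent b b_gt0; rewrite divfK ?gt_eqF //; lra.
have [a_le0 | a_gt0] := leP a 0; first exact: le_trans a_le0 (powR_ge0 _ _).
have := tangent (a `^ r^-1) (powR_gt0 _ a_gt0).
rewrite -powRrM mulVf ?gt_eqF // powRr1; last exact: ltW.
by have := mulr_gt0 a_gt0 r_gt0; lra.
Qed.

Lemma le_powR_of_no_sure_loss (Omega : Type) (z : Omega -> R) (a b : R) :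
  (forall w, 0 <= z w) -> 0 <= b ->
  (forall k e, 0 <= k ->
    (forall w, z w `^ r - a - k * (z w - b) <= - e) -> e <= 0) ->
  a <= b `^ r.
Proof.
move=> z_ge0 b_ge0 no_loss; apply: le_powR_of_tangent => // c c_gt0.
rewrite -subr_le0; apply: (no_loss (r * c `^ r / c)).
  by rewrite divr_ge0 ?mulr_ge0 ?powR_ge0 // ltW.
by move=> w; have := powR_le_tangent c_gt0 (z_ge0 w); lra.
Qed.

End PowRConcave.

Lemma powR_inv_le_of_le_powR_div (R : realType) (s t a b : R) :
  0 < s -> 0 < t -> 0 <= a -> a <= b `^ (s / t) -> a `^ s^-1 <= b `^ t^-1.
Proof.
move=> s_gt0 t_gt0 a_ge0 a_le.
have -> : t^-1 = s / t * s^-1 by rewrite mulrAC mulfV ?gt_eqF // mul1r.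
rewrite powRrM; apply: ge0_ler_powR => //; rewrite ?invr_ge0 ?nnegrE ?powR_ge0 //.
exact: ltW.
Qed.

Section TwoCoherent.
Variables (R : realType) (Omega : Type) (w0 : Omega).
Variables (D : set (Omega -> R)) (P : (Omega -> R) -> R).
Hypothesis P_coh : two_coherent D P.

Lemma two_coherent_no_sure_loss (X0 X1 : Omega -> R) (s1 s0 e : R) :
  D X0 -> D X1 -> 0 <= s1 ->
  (forall w, s1 * (X1 w - P X1) - s0 * (X0 w - P X0) <= - e) -> e <= 0.
Proof.
move=> DX0 DX1 s1_ge0 gain_le.
suff : sup (range (fun w => s1 * (X1 w - P X1) - s0 * (X0 w - P X0))) <= - e.
  by have := P_coh DX0 DX1 s0 s1_ge0; lra.
apply: ge_sup; first by exists (s1 * (X1 w0 - P X1) - s0 * (X0 w0 - P X0)), w0.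
by move=> _ [w _ <-].
Qed.

Lemma lower_ge (Y : Omega -> R) (c : R) : D Y -> (forall w, c <= Y w) -> c <= P Y.
Proof.
move=> DY c_le; rewrite -subr_le0.
apply: (@two_coherent_no_sure_loss Y Y 0 1) => // w.
by have := c_le w; lra.
Qed.

Lemma lower_le (Y : Omega -> R) (c : R) : D Y -> (forall w, Y w <= c) -> P Y <= c.
Proof.
move=> DY le_c; rewrite -subr_le0.
apply: (@two_coherent_no_sure_loss Y Y 1 0) => // w.
by have := le_c w; lra.
Qed.

Lemma upper_ge (Y : Omega -> R) (c : R) :
  D (fun w => - Y w) -> (forall w, c <= Y w) -> c <= upper P Y.
Proof.
move=> DNY c_le; rewrite /upper lerNr; apply: lower_le => // w.
by rewrite lerN2.
Qed.

Lemma lower_le_upper (Y : Omega -> R) :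
  D Y -> D (fun w => - Y w) -> P Y <= upper P Y.
Proof.
move=> DY DNY; rewrite /upper -subr_le0 opprK.
by apply: (@two_coherent_no_sure_loss Y (fun w => - Y w) 1 (-1)) => // w; lra.
Qed.

Section Lyapunov.
Variables (Z : Omega -> R) (s t : R).
Hypotheses (s_gt0 : 0 < s) (s_lt_t : s < t).

Let t_gt0 : 0 < t. Proof. exact: lt_trans s_lt_t. Qed.
Let st_gt0 : 0 < s / t. Proof. by rewrite divr_gt0. Qed.
Let st_lt1 : s / t < 1. Proof. by rewrite ltr_pdivrMr // mul1r. Qed.
Let Zt_ge0 w : 0 <= Z w `^ t. Proof. exact: powR_ge0. Qed.

Let powRt_div w : (Z w `^ t) `^ (s / t) = Z w `^ s.
Proof. by rewrite -powRrM mulrC divfK ?gt_eqF. Qed.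

Lemma lower_powR_inv_le :
  D (fun w => Z w `^ s) -> D (fun w => Z w `^ t) ->
  P (fun w => Z w `^ s) `^ s^-1 <= P (fun w => Z w `^ t) `^ t^-1.
Proof.
move=> DZs DZt; apply: powR_inv_le_of_le_powR_div => //.
  exact: lower_ge DZs (fun w => powR_ge0 _ _).
apply: (le_powR_of_no_sure_loss st_gt0 st_lt1 Zt_ge0).
  exact: lower_ge DZt Zt_ge0.
move=> k e k_ge0 gain_le.
apply: (two_coherent_no_sure_loss (s0 := k) DZt DZs ler01) => w.
by have := gain_le w; rewrite powRt_div; lra.
Qed.

Lemma upper_powR_inv_le :
  D (fun w => - Z w `^ s) -> D (fun w => - Z w `^ t) ->
  upper P (fun w => Z w `^ s) `^ s^-1 <= upper P (fun w => Z w `^ t) `^ t^-1.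
Proof.
move=> DNZs DNZt; apply: powR_inv_le_of_le_powR_div => //.
  exact: upper_ge DNZs (fun w => powR_ge0 _ _).
apply: (le_powR_of_no_sure_loss st_gt0 st_lt1 Zt_ge0).
  exact: upper_ge DNZt Zt_ge0.
move=> k e k_ge0 gain_le.
apply: (two_coherent_no_sure_loss (s0 := 1) DNZs DNZt k_ge0) => w.
by have := gain_le w; rewrite powRt_div /upper; lra.
Qed.

End Lyapunov.
End TwoCoherent.

Theorem proposition1 (R : realType) (Omega : Type) (w0 : Omega)
  (D : set (Omega -> R)) (P : (Omega -> R) -> R)
  (hD : forall Y, D Y -> gamble Y) (hcoh : two_coherent D P)
  (X : Omega -> R) (hX : gamble X) (s t : R) (hs : 0 < s) (hst : s < t) :
  (D (fun w => powR `|X w| s) -> D (fun w => - powR `|X w| s) ->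
   D (fun w => - powR `|X w| t) ->
   powR (P (fun w => powR `|X w| s)) s^-1
     <= powR (upper P (fun w => powR `|X w| s)) s^-1 /\
   powR (upper P (fun w => powR `|X w| s)) s^-1
     <= powR (upper P (fun w => powR `|X w| t)) t^-1) /\
  ((forall w, 0 <= X w) ->
   D (fun w => powR (X w) s) -> D (fun w => powR (X w) t) ->
   powR (P (fun w => powR (X w) s)) s^-1 <= powR (P (fun w => powR (X w) t)) t^-1).
Proof.
split=> [DXs DNXs DNXt | _ DXs DXt].
  2: exact: (lower_powR_inv_le w0 hcoh hs hst DXs DXt).
split; last exact: (upper_powR_inv_le w0 hcoh hs hst DNXs DNXt).
apply: ge0_ler_powR; rewrite ?invr_ge0 ?nnegrE.
- exact: ltW.
- exact: (lower_ge w0 hcoh DXs (fun w => powR_ge0 _ _)).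
- exact: (upper_ge w0 hcoh DNXs (fun w => powR_ge0 _ _)).
- exact: (lower_le_upper w0 hcoh DXs DNXs).
Qed.
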